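(* Let $n,d\ge 1$. For $k=1,2,\ldots$ let $\mathbf M_k\in\mathbb R^{n\times n}$ be invertible, and for $k=0,1,2,\ldots$ let $\mathbf H_k\in\mathbb R^{d\times n}$ and let $\mathbf R_k\in\mathbb R^{d\times d}$ be symmetric positive definite; put ${\boldsymbol\Omega}_k=\mathbf H_k^{\mathrm T}\mathbf R_k^{-1}\mathbf H_k$. For $k\ge l\ge 0$ let $\mathbf M_{k:l}=\mathbf M_k\mathbf M_{k-1}\cdots\mathbf M_{l+1}$ (with $\mathbf M_{k:k}=\mathbf I_n$). Let $\mathbf P_0\in\mathbb R^{n\times n}$ be symmetric positive semi-definite (possibly singular), and define $\mathbf P_k$ by the perfect-model Kalman filter forecast recurrence $$\mathbf P_{k+1}=\mathbf M_{k+1}\big(\mathbf I_n+\mathbf P_k{\boldsymbol\Omega}_k\big)^{-1}\mathbf P_k\mathbf M_{k+1}^{\mathrm T},\qquad k\ge 0.$$ Define ${\boldsymbol\Gamma}_k=\sum_{l=0}^{k-1}\mathbf M_{k:l}^{-\mathrm T}{\boldsymbol\Omega}_l\mathbf M_{k:l}^{-1}$ and ${\boldsymbol\Theta}_k=\mathbf M_{k:0}^{\mathrm T}{\boldsymbol\Gamma}_k\mathbf M_{k:0}=\sum_{l=0}^{k-1}\mathbf M_{l:0}^{\mathrm T}{\boldsymbol\Omega}_l\mathbf M_{l:0}$. Then for every $k\ge 0$, $$\mathbf P_k=\mathbf M_{k:0}\mathbf P_0\mathbf M_{k:0}^{\mathrm T}\big(\mathbf I_n+{\boldsymbol\Gamma}_k\mathbf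 M_{k:0}\mathbf P_0\mathbf M_{k:0}^{\mathrm T}\big)^{-1}=\mathbf M_{k:0}\mathbf P_0\big(\mathbf I_n+{\boldsymbol\Theta}_k\mathbf P_0\big)^{-1}\mathbf M_{k:0}^{\mathrm T}.$$
   Context: Empty sums are zero, so ${\boldsymbol\Gamma}_0={\boldsymbol\Theta}_0=\mathbf 0$. *)

From HB Require Import structures.
From mathcomp Require Import all_boot all_order all_algebra.
Set Implicit Arguments. Unset Strict Implicit. Unset Printing Implicit Defensive.
Import Order.TTheory GRing.Theory Num.Theory.
Local Open Scope ring_scope.

Definition symmetric_mx (R : realFieldType) (n : nat) (A : 'M[R]_n) : Prop :=
  A^T = A.

Definition posdef_mx (R : realFieldType) (n : nat) (A : 'M[R]_n) : Prop :=
  symmetric_mx A /\ forall x : 'cV[R]_n, x != 0 -> 0 < (x^T *m A *m x) 0 0.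

Definition psd_mx (R : realFieldType) (n : nat) (A : 'M[R]_n) : Prop :=
  symmetric_mx A /\ forall x : 'cV[R]_n, 0 <= (x^T *m A *m x) 0 0.

(* M_{k:l} = M_k M_{k-1} ... M_{l+1}, and M_{k:l} = I when k <= l *)
Fixpoint Mprod (R : realFieldType) (n : nat) (M : nat -> 'M[R]_n) (k l : nat)
  : 'M[R]_n :=
  match k with
  | 0 => 1%:M
  | k'.+1 => if (k'.+1 <= l)%N then 1%:M else M k'.+1 *m Mprod M k' l
  end.

Definition Omega (R : realFieldType) (n d : nat) (H : nat -> 'M[R]_(d, n))
  (Rc : nat -> 'M[R]_d) (k : nat) : 'M[R]_n :=
  (H k)^T *m invmx (Rc k) *m H k.

Definition Gamma (R : realFieldType) (n d : nat) (M : nat -> 'M[R]_n)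
  (H : nat -> 'M[R]_(d, n)) (Rc : nat -> 'M[R]_d) (k : nat) : 'M[R]_n :=
  \sum_(l < k) (invmx (Mprod M k l))^T *m Omega H Rc l *m invmx (Mprod M k l).

Definition Theta (R : realFieldType) (n d : nat) (M : nat -> 'M[R]_n)
  (H : nat -> 'M[R]_(d, n)) (Rc : nat -> 'M[R]_d) (k : nat) : 'M[R]_n :=
  (Mprod M k 0)^T *m Gamma M H Rc k *m Mprod M k 0.

From HB Require Import structures.
From mathcomp Require Import all_boot all_order all_algebra.
From mathcomp Require Import ring.
Import Order.TTheory GRing.Theory Num.Theory.
Local Open Scope ring_scope.
Set Implicit Arguments. Unset Strict Implicit.

(* Conjugating by M_{k:0}, write P_k = M_{k:0} X_k M_{k:0}^T. One filter step then reads
   X |-> (I + X W)^{-1} X with W = M_{k:0}^T Omega_k M_{k:0}, and on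
   X = P_0 (I + Theta P_0)^{-1} this map just replaces Theta by Theta + W, because
   X (I + (Theta + W) P_0) = (I + X W) P_0.  Every inverse involved exists since
   I + S T is invertible for positive semi-definite S and T.  The Gamma-form is the
   Theta-form conjugated by M_{k:0}^{-T}. *)

Section PsdMatrices.
Variables (R : realFieldType) (n : nat).
Implicit Types (A S T : 'M[R]_n) (x z : 'cV[R]_n).

Lemma quad_ge0_lin_eq0 (a c : R) :
  0 <= c -> (forall t, 0 <= 2 * t * a + t ^+ 2 * c) -> a = 0.
Proof.
move=> c_ge0 quad_ge0; have c1_gt0 : 0 < c + 1 by rewrite ltr_wpDl.
have := quad_ge0 (- a / (c + 1)).
have -> : 2 * (- a / (c + 1)) * a + (- a / (c + 1)) ^+ 2 * c =
    - (a ^+ 2 * (c + 2)) / (c + 1) ^+ 2 by field; rewrite gt_eqF.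
rewrite pmulr_lge0 ?invr_gt0 ?exprn_gt0 // oppr_ge0 pmulr_lle0 ?ltr_wpDl //.
by rewrite -[_ <= 0]negbK -ltNge lt0r sqr_ge0 andbT sqrf_eq0 negbK => /eqP.
Qed.

Lemma trmx_mul_self_eq0 z : (z^T *m z) 0 0 = 0 -> z = 0.
Proof.
rewrite mxE => /eqP; rewrite psumr_eq0 => [/allP zz0|i _]; last first.
  by rewrite mxE -expr2 sqr_ge0.
apply/matrixP => i j; rewrite (ord1 j) !mxE.
by have /implyP/(_ isT) := zz0 i (mem_index_enum i); rewrite mxE mulf_eq0 orbb => /eqP.
Qed.

Lemma psd_mx_ker A x : psd_mx A -> (x^T *m A *m x) 0 0 = 0 -> A *m x = 0.
Proof.
move=> [sA A_ge0] qx0; set z := A *m x.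
have xA : x^T *m A = z^T by rewrite trmx_mul sA.
have expand t : ((x + t *: z)^T *m A *m (x + t *: z)) 0 0 =
    2 * t * (z^T *m z) 0 0 + t ^+ 2 * (z^T *m A *m z) 0 0.
  rewrite mulmxDr -scalemxAr [(_ + _)^T]linearD /= linearZ /= !mulmxDl -!scalemxAl.
  have xAz : x^T *m A *m z = z^T *m z by rewrite xA.
  have zAx : z^T *m A *m x = z^T *m z by rewrite -mulmxA.
  have {}qx0 : x^T *m A *m x = 0 by apply/rowP => i; rewrite ord1 qx0 mxE.
  rewrite xAz zAx qx0 add0r !mxE; ring.
apply: trmx_mul_self_eq0; apply: (quad_ge0_lin_eq0 (A_ge0 z)) => t.
by rewrite -expand.
Qed.

Lemma unitmx_1DM_psd S T : psd_mx S -> psd_mx T -> 1%:M + S *m T \in unitmx.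
Proof.
move=> psdS psdT; rewrite -row_free_unit; apply: inj_row_free => v.
rewrite mulmxDr mulmx1 mulmxA => /eqP; rewrite addr_eq0 => /eqP v_eq.
set w := (v *m S)^T.
(* From v = - v S T: the S-form of v^T is minus the T-form of w = S v^T, so both vanish. *)
have qS_qT : (v^T^T *m S *m v^T) 0 0 = - (w^T *m T *m w) 0 0.
  rewrite trmxK {2}v_eq linearN /= mulmxN mxE /w trmxK !trmx_mul.
  by rewrite psdT.1 !mulmxA.
have qT0 : (w^T *m T *m w) 0 0 = 0.
  apply/eqP; rewrite eq_le (psdT.2 w) andbT -oppr_ge0 -qS_qT; exact: psdS.2.
have /(congr1 trmx) := psd_mx_ker psdT qT0.
by rewrite trmx_mul trmxK psdT.1 linear0 => vST0; rewrite v_eq vST0 oppr0.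
Qed.

Lemma psd_mx0 : psd_mx (0 : 'M[R]_n).
Proof. by split=> [|x]; rewrite ?/symmetric_mx ?trmx0 // mulmx0 mul0mx mxE. Qed.

Lemma psd_mxD S T : psd_mx S -> psd_mx T -> psd_mx (S + T).
Proof.
move=> [sS S_ge0] [sT T_ge0]; split=> [|x]; first by rewrite /symmetric_mx linearD /= sS sT.
by rewrite mulmxDr mulmxDl mxE addr_ge0.
Qed.

Lemma psd_mx_congr m (B : 'M[R]_(n, m)) S : psd_mx S -> psd_mx (B^T *m S *m B).
Proof.
move=> [sS S_ge0]; split=> [|x]; first by rewrite /symmetric_mx !trmx_mul trmxK sS mulmxA.
by have := S_ge0 (B *m x); rewrite trmx_mul !mulmxA.
Qed.

Lemma posdef_mx_unit S : posdef_mx S -> S \in unitmx.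
Proof.
move=> [_ S_gt0]; rewrite -row_free_unit; apply: inj_row_free => v vS0.
apply/eqP/negPn/negP => v_neq0.
have vT_neq0 : v^T != 0 by rewrite -(inj_eq trmx_inj) trmxK linear0.
by have := S_gt0 _ vT_neq0; rewrite trmxK vS0 mul0mx mxE ltxx.
Qed.

Lemma posdef_mx_invmx S : posdef_mx S -> psd_mx (invmx S).
Proof.
move=> posS; have uS := posdef_mx_unit posS; case: posS => sS S_gt0.
split=> [|x]; first by rewrite /symmetric_mx trmx_inv sS.
have -> : x^T *m invmx S *m x = (invmx S *m x)^T *m S *m (invmx S *m x).
  by rewrite trmx_mul trmx_inv sS -!mulmxA mulKVmx.
have [->|y_neq0] := eqVneq (invmx S *m x) 0; first by rewrite mulmx0 mxE.
exact: ltW (S_gt0 _ y_neq0).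
Qed.
End PsdMatrices.

Section InformationUpdate.
Variables (R : realFieldType) (n : nat).
Implicit Types A C Q S T U W X Z : 'M[R]_n.

Lemma invmxM A C : A \in unitmx -> C \in unitmx ->
  invmx (A *m C) = invmx C *m invmx A.
Proof.
move=> uA uC; have uAC : A *m C \in unitmx by rewrite unitmx_mul uA uC.
have AC_inv : A *m C *m (invmx C *m invmx A) = 1%:M.
  by rewrite mulmxA mulmxK // mulmxV.
by rewrite -[LHS]mulmx1 -AC_inv mulKmx.
Qed.

Lemma invmx_conj C Z : C \in unitmx ->
  invmx (C *m Z *m invmx C) = C *m invmx Z *m invmx C.
Proof.
move=> uC; have [uZ|uZN] := boolP (Z \in unitmx).
  by rewrite !invmxM ?unitmx_mul ?unitmx_inv ?uC ?uZ // invmxK mulmxA.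
rewrite (invmx_out uZN) invmx_out // inE !unitmx_mul unitmx_inv uC.
by rewrite (negbTE uZN).
Qed.

Lemma add1mx_conj C U : C \in unitmx ->
  1%:M + C *m U *m invmx C = C *m (1%:M + U) *m invmx C.
Proof. by move=> uC; rewrite mulmxDr mulmx1 mulmxDl mulmxV. Qed.

Lemma invmx_push_through Q T :
  1%:M + T *m Q \in unitmx -> 1%:M + Q *m T \in unitmx ->
  Q *m invmx (1%:M + T *m Q) = invmx (1%:M + Q *m T) *m Q.
Proof.
move=> uTQ uQT; have QTQ : (1%:M + Q *m T) *m Q = Q *m (1%:M + T *m Q).
  by rewrite mulmxDl mulmxDr mul1mx mulmx1 mulmxA.
by rewrite -[LHS](mulKmx uQT) [_ *m (Q *m _)]mulmxA QTQ mulmxK.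
Qed.

Lemma information_update Q T W : psd_mx Q -> psd_mx T -> psd_mx W ->
  invmx (1%:M + Q *m invmx (1%:M + T *m Q) *m W) *m (Q *m invmx (1%:M + T *m Q))
  = Q *m invmx (1%:M + (T + W) *m Q).
Proof.
move=> psdQ psdT psdW; have psdTW := psd_mxD psdT psdW.
have uTQ := unitmx_1DM_psd psdT psdQ; have uQT := unitmx_1DM_psd psdQ psdT.
have uTWQ := unitmx_1DM_psd psdTW psdQ; have uQTW := unitmx_1DM_psd psdQ psdTW.
set X := Q *m invmx (1%:M + T *m Q).
have XW_eq : 1%:M + X *m W = invmx (1%:M + Q *m T) *m (1%:M + Q *m (T + W)).
  by rewrite /X invmx_push_through // (mulmxDr Q) addrA mulmxDr (mulVmx uQT) mulmxA.
have uXW : 1%:M + X *m W \in unitmx by rewrite XW_eq unitmx_mul unitmx_inv uQT.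
have X_TWQ : X *m (1%:M + (T + W) *m Q) = (1%:M + X *m W) *m Q.
  by rewrite (mulmxDl T) addrA mulmxDr {1}/X mulmxKV // mulmxDl mul1mx mulmxA.
by rewrite -[X in _ *m X](mulmxK uTWQ) X_TWQ mulmxA mulKmx.
Qed.

Lemma information_update_conj A X Om : A \in unitmx ->
  invmx (1%:M + A *m X *m A^T *m Om) *m (A *m X *m A^T)
  = A *m (invmx (1%:M + X *m (A^T *m Om *m A)) *m X) *m A^T.
Proof.
move=> uA; have -> : A *m X *m A^T *m Om = A *m (X *m (A^T *m Om *m A)) *m invmx A.
  by rewrite !mulmxA mulmxK.
by rewrite add1mx_conj // invmx_conj // !mulmxA mulmxKV.
Qed.

Lemma add1mx_conjT A Q S : A \in unitmx ->
  1%:M + (invmx A)^T *m S *m invmx A *m (A *m Q *m A^T)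
  = (invmx A)^T *m (1%:M + S *m Q) *m A^T.
Proof.
move=> uA; rewrite mulmxDr mulmx1 mulmxDl -trmx_mul mulmxV // trmx1.
by rewrite !mulmxA mulmxKV.
Qed.

Lemma gain_conjT A Q S : A \in unitmx ->
  A *m Q *m A^T *m invmx (1%:M + (invmx A)^T *m S *m invmx A *m (A *m Q *m A^T))
  = A *m Q *m invmx (1%:M + S *m Q) *m A^T.
Proof.
move=> uA; have uAT : A^T \in unitmx by rewrite unitmx_tr.
rewrite add1mx_conjT // trmx_inv -{3}(invmxK A^T) invmx_conj ?unitmx_inv //.
by rewrite invmxK !mulmxA mulmxK.
Qed.
End InformationUpdate.

Section KalmanFilter.
Variables (R : realFieldType) (n d : nat).
Variables (M : nat -> 'M[R]_n) (H : nat -> 'M[R]_(d, n)) (Rc : nat -> 'M[R]_d).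

Lemma Mprod_id k : Mprod M k k = 1%:M.
Proof. by case: k => //= k; rewrite leqnn. Qed.

Lemma MprodS k l : (l <= k)%N -> Mprod M k.+1 l = M k.+1 *m Mprod M k l.
Proof. by move=> le_lk /=; rewrite ltnNge le_lk. Qed.

Lemma Mprod_trans k l m : (m <= l <= k)%N ->
  Mprod M k m = Mprod M k l *m Mprod M l m.
Proof.
elim: k => [|k IHk] /andP[le_ml le_lk].
  by move: le_lk; rewrite leqn0 => /eqP->; rewrite /= mul1mx.
have [->|ne_lk] := eqVneq l k.+1; first by rewrite Mprod_id mul1mx.
have le_lk' : (l <= k)%N by rewrite -ltnS ltn_neqAle ne_lk.
by rewrite !MprodS ?(leq_trans le_ml) // IHk ?le_ml ?le_lk' // mulmxA.
Qed.

Hypothesis M_unit : forall k, (0 < k)%N -> M k \in unitmx.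

Lemma Mprod_unit k l : Mprod M k l \in unitmx.
Proof.
elim: k => [|k IHk] /=; first exact: unitmx1.
by case: ifP => _; rewrite ?unitmx1 // unitmx_mul M_unit.
Qed.

Lemma Theta_sum k :
  Theta M H Rc k = \sum_(l < k) (Mprod M l 0)^T *m Omega H Rc l *m Mprod M l 0.
Proof.
rewrite /Theta /Gamma mulmx_sumr mulmx_suml; apply: eq_bigr => l _.
rewrite (@Mprod_trans k l 0) ?(ltnW (ltn_ord l)) //.
rewrite trmx_mul -!mulmxA mulKmx ?Mprod_unit //.
by rewrite (mulmxA (Mprod M k l)^T) -trmx_mul mulVmx ?Mprod_unit // trmx1 mul1mx.
Qed.

Lemma Gamma_conj k : Gamma M H Rc k =
  (invmx (Mprod M k 0))^T *m Theta M H Rc k *m invmx (Mprod M k 0).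
Proof.
have uB := Mprod_unit k 0.
by rewrite /Theta !mulmxA -trmx_mul mulmxV // trmx1 mul1mx mulmxK.
Qed.

Hypothesis Rc_posdef : forall k, posdef_mx (Rc k).

Lemma Omega_psd l : psd_mx (Omega H Rc l).
Proof. exact/psd_mx_congr/posdef_mx_invmx. Qed.

Lemma Theta_psd k : psd_mx (Theta M H Rc k).
Proof.
rewrite Theta_sum; apply: (big_ind (@psd_mx R n)) => [|S T|l _].
- exact: psd_mx0.
- exact: psd_mxD.
- exact/psd_mx_congr/Omega_psd.
Qed.

Variable P : nat -> 'M[R]_n.
Hypothesis P0_psd : psd_mx (P 0).
Hypothesis P_rec : forall k, P k.+1 =
  M k.+1 *m invmx (1%:M + P k *m Omega H Rc k) *m P k *m (M k.+1)^T.

Lemma Kalman_information_form k :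
  P k = Mprod M k 0 *m P 0 *m invmx (1%:M + Theta M H Rc k *m P 0) *m (Mprod M k 0)^T.
Proof.
elim: k => [|k IHk].
  by rewrite Theta_sum big_ord0 mul0mx addr0 invmx1 /= trmx1 mul1mx !mulmx1.
have Theta_rec : Theta M H Rc k.+1 =
    Theta M H Rc k + (Mprod M k 0)^T *m Omega H Rc k *m Mprod M k 0.
  by rewrite !Theta_sum big_ord_recr.
rewrite P_rec IHk -(mulmxA _ (P 0)) -(mulmxA (M k.+1)).
rewrite information_update_conj ?Mprod_unit // information_update //.
- by rewrite -Theta_rec (MprodS (leq0n k)) trmx_mul !mulmxA.
- exact: Theta_psd.
- exact/psd_mx_congr/Omega_psd.
Qed.
End KalmanFilter.

Unset Implicit Arguments.

Theorem mainTheorem1 (R : realFieldType) (n d : nat)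
  (M : nat -> 'M[R]_n) (H : nat -> 'M[R]_(d, n)) (Rc : nat -> 'M[R]_d)
  (P : nat -> 'M[R]_n) :
  (0 < n)%N -> (0 < d)%N ->
  (forall k, (0 < k)%N -> M k \in unitmx) ->
  (forall k, posdef_mx (Rc k)) ->
  psd_mx (P 0) ->
  (forall k, P k.+1 =
     M k.+1 *m invmx (1%:M + P k *m Omega H Rc k) *m P k *m (M k.+1)^T) ->
  forall k : nat,
    Theta M H Rc k =
      \sum_(l < k) (Mprod M l 0)^T *m Omega H Rc l *m Mprod M l 0 /\
    (1%:M + Gamma M H Rc k *m (Mprod M k 0 *m P 0 *m (Mprod M k 0)^T))
      \in unitmx /\
    (1%:M + Theta M H Rc k *m P 0) \in unitmx /\
    P k = Mprod M k 0 *m P 0 *m (Mprod M k 0)^T *m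
          invmx (1%:M + Gamma M H Rc k *m (Mprod M k 0 *m P 0 *m (Mprod M k 0)^T)) /\
    P k = Mprod M k 0 *m P 0 *m invmx (1%:M + Theta M H Rc k *m P 0)
          *m (Mprod M k 0)^T.
Proof.
move=> _ _ M_unit Rc_posdef P0_psd P_rec k.
have uB := Mprod_unit M_unit k 0.
have psdT : psd_mx (Theta M H Rc k) by apply: Theta_psd.
have uTP := unitmx_1DM_psd psdT P0_psd.
have P_eq : P k = Mprod M k 0 *m P 0 *m invmx (1%:M + Theta M H Rc k *m P 0)
    *m (Mprod M k 0)^T by apply: Kalman_information_form.
rewrite Gamma_conj //; split; first exact: Theta_sum.
split; first by rewrite add1mx_conjT // !unitmx_mul !unitmx_tr unitmx_inv uB uTP.
by rewrite gain_conjT.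
Qed.
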